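(* For $n\geq1$ let $\ell_n=\sqrt[n]{n!}$ and $x_n=\log(\ell_{n+1}/\ell_n)$. Then for every integer $n\geq 468$, $$\frac{\ell_{n+2}}{\ell_{n+1}}+\frac{\ell_n}{\ell_{n+1}}=2\exp\Big(\frac{x_{n+1}-x_n}{2}\Big)\cosh\Big(\frac{x_{n+1}+x_n}{2}\Big)\leq 2\bigg(1-\frac{25}{144n^3}-\frac{1}{4n^4}+\frac{\tfrac12\log n+\tfrac{101}{288}+\tfrac12\log(2\pi)}{n^5}\bigg)<2.$$
   Context: $\log$ denotes the natural logarithm. *)

From Stdlib Require Import Reals Arith.
Open Scope R_scope.

Definition ell (n : nat) : R := Rpower (INR (fact n)) (/ INR n).

Definition xseq (n : nat) : R := ln (ell (S n) / ell n).

From Stdlib Require Import Reals Arith Lra Lia Psatz.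
From Coquelicot Require Import Coquelicot.
Open Scope R_scope.

(* With a_k = log l_k = log (k!) / k, u = a_(n+2) - a_(n+1) and v = a_(n+1) - a_n, the sum is
   e^u + e^(-v) = 2 e^((u-v)/2) cosh ((u+v)/2) <= 2 exp ((u-v)/2 + ((u+v)/2)^2/2), because
   cosh w <= exp (w^2/2).  As a_(k+1) - a_k = (log (k+1) - a_k) / (k+1), this exponent is a
   quadratic in p = log (n+1) - a_n; after completing the square, the square term is at most
   1/(20 n^3) by the Stirling-type bounds 1 <= log n! - n log n + n <= 1 + (log n)/2, and the
   remaining term is about -1/(4 n^3).  Hence the exponent is at most -19/(100 n^3), and
   exp (-19/(100 n^3)) <= 1 - 25/(144 n^3) - 1/(4 n^4).  The n^-5 term is nonnegative and
   smaller than the two negative ones, which gives both inequalities. *)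

Lemma is_derive_nonneg_le (f f' : R -> R) (a b : R) : a <= b ->
  (forall c, a <= c <= b -> is_derive f c (f' c)) ->
  (forall c, a < c < b -> 0 <= f' c) -> f a <= f b.
Proof.
  intros Hab Hd Hpos.
  destruct (Req_dec a b) as [<- | Hne]; [lra |].
  destruct (MVT_cor2 f f' a b) as [c [Hfc Hc]]; [lra | |].
  - intros c Hc; apply is_derive_Reals, Hd; lra.
  - assert (0 <= f' c) by (apply Hpos; lra). nra.
Qed.

Lemma sinh_le_mul_cosh c : 0 <= c -> sinh c <= c * cosh c.
Proof.
  intros Hc.
  apply (is_derive_nonneg_le (fun t => t * cosh t - sinh t) (fun t => t * sinh t) 0 c) in Hc.
  - rewrite cosh_0, sinh_0 in Hc. lra.
  - intros t _. unfold cosh, sinh. auto_derive; [easy | field].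
  - intros t Ht. pose proof (sinh_lt 0 t). rewrite sinh_0 in *. nra.
Qed.

Lemma cosh_le_exp_sq w : cosh w <= exp (w ^ 2 / 2).
Proof.
  assert (Hnonneg : forall w, 0 <= w -> cosh w <= exp (w ^ 2 / 2)).
  { clear w. intros w Hw.
    apply (is_derive_nonneg_le (fun t => - (cosh t * exp (- (t ^ 2 / 2))))
             (fun t => exp (- (t ^ 2 / 2)) * (t * cosh t - sinh t)) 0 w) in Hw.
    - replace (- (0 ^ 2 / 2)) with 0 in Hw by field.
      rewrite cosh_0, exp_0, exp_Ropp in Hw.
      pose proof (exp_pos (w ^ 2 / 2)).
      apply (Rmult_le_reg_r (/ exp (w ^ 2 / 2))); [now apply Rinv_0_lt_compat |].
      rewrite Rinv_r; lra.
    - intros t _. unfold cosh, sinh. auto_derive; [easy |].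
      replace (t * (t * 1) * / 2) with (t ^ 2 / 2) by field. field.
    - intros t Ht. pose proof (sinh_le_mul_cosh t). pose proof (exp_pos (- (t ^ 2 / 2))). nra. }
  destruct (Rle_dec 0 w) as [Hw | Hw]; [auto |].
  replace (cosh w) with (cosh (- w)) by (unfold cosh; rewrite Ropp_involutive; field).
  replace (w ^ 2) with ((- w) ^ 2) by ring. apply Hnonneg; lra.
Qed.

Lemma ln_le_sub_1 y : 0 < y -> ln y <= y - 1.
Proof. intros Hy. pose proof (exp_ineq1_le (ln y)). rewrite exp_ln in *; lra. Qed.

Lemma ln_1p_le x : -1 < x -> ln (1 + x) <= x.
Proof. intros Hx. pose proof (ln_le_sub_1 (1 + x) ltac:(lra)). lra. Qed.

Lemma ln_1p_ge x : 0 <= x -> 2 * x / (2 + x) <= ln (1 + x).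
Proof.
  intros Hx.
  apply (is_derive_nonneg_le (fun t => ln (1 + t) - 2 * t / (2 + t))
           (fun t => t ^ 2 / ((1 + t) * (2 + t) ^ 2)) 0 x) in Hx.
  - rewrite Rplus_0_r, ln_1 in Hx. replace (2 * 0 / (2 + 0)) with 0 in Hx by field. lra.
  - intros t Ht. auto_derive; [lra | field; lra].
  - intros t Ht. apply Rdiv_le_0_compat; [nra |].
    apply Rmult_lt_0_compat; [lra | apply pow_lt; lra].
Qed.

Lemma ln_1p_le_cubic x : 0 <= x -> ln (1 + x) <= x - x ^ 2 / 2 + x ^ 3 / 3.
Proof.
  intros Hx.
  apply (is_derive_nonneg_le (fun t => t - t ^ 2 / 2 + t ^ 3 / 3 - ln (1 + t))
           (fun t => t ^ 3 / (1 + t)) 0 x) in Hx.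
  - rewrite Rplus_0_r, ln_1 in Hx. lra.
  - intros t Ht. auto_derive; [lra | field; lra].
  - intros t Ht. apply Rdiv_le_0_compat; [apply pow_le |]; lra.
Qed.

Lemma ln_1p_inv_bounds x : 0 < x -> 0 <= ln (1 + / x) <= / x.
Proof.
  intros Hx. pose proof (Rinv_0_lt_compat x Hx).
  pose proof (ln_1p_ge (/ x) ltac:(lra)). pose proof (ln_1p_le (/ x) ltac:(lra)).
  assert (0 <= 2 * / x / (2 + / x)) by (apply Rdiv_le_0_compat; lra).
  lra.
Qed.

Lemma ln_succ x : 0 < x -> ln (x + 1) = ln x + ln (1 + / x).
Proof.
  intros Hx. pose proof (Rinv_0_lt_compat x Hx).
  rewrite <- ln_mult by lra. f_equal. field. lra.
Qed.

Lemma ln_fact_succ k : ln (INR (fact (S k))) = ln (INR k + 1) + ln (INR (fact k)).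
Proof.
  rewrite fact_simpl, mult_INR, S_INR.
  apply ln_mult; [pose proof (pos_INR k); lra | apply INR_fact_lt_0].
Qed.

Definition stirling_defect (k : nat) : R :=
  ln (INR (fact k)) - INR k * ln (INR k) + INR k.

Lemma stirling_defect_succ k : (1 <= k)%nat ->
  stirling_defect (S k) = stirling_defect k + 1 - INR k * ln (1 + / INR k).
Proof.
  intros Hk. assert (1 <= INR k) by (apply (le_INR 1); lia).
  unfold stirling_defect. rewrite ln_fact_succ, S_INR, ln_succ by lra. ring.
Qed.

Lemma stirling_defect_bounds k : (1 <= k)%nat ->
  1 <= stirling_defect k <= 1 + ln (INR k) / 2.
Proof.
  induction k as [| k IH]; intros Hk; [lia |].
  destruct (Nat.eq_dec k 0) as [-> | Hk0].
  { unfold stirling_defect. simpl. rewrite ln_1. lra. }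
  specialize (IH ltac:(lia)).
  assert (HK : 1 <= INR k) by (apply (le_INR 1); lia).
  rewrite stirling_defect_succ, S_INR, ln_succ by (lia || lra).
  assert (0 < / INR k) by (apply Rinv_0_lt_compat; lra).
  pose proof (ln_1p_le (/ INR k) ltac:(lra)) as Hup.
  pose proof (ln_1p_ge (/ INR k) ltac:(lra)) as Hlo.
  replace (2 * / INR k / (2 + / INR k)) with (/ (INR k + / 2)) in Hlo by (field; lra).
  assert (Hmul_up : INR k * ln (1 + / INR k) <= 1).
  { replace 1 with (INR k * / INR k) at 2 by (field; lra).
    apply Rmult_le_compat_l; lra. }
  assert (Hmul_lo : 1 <= (INR k + / 2) * ln (1 + / INR k)).
  { replace 1 with ((INR k + / 2) * / (INR k + / 2)) at 1 by (field; lra).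
    apply Rmult_le_compat_l; lra. }
  lra.
Qed.

Lemma ln_2_le : ln 2 <= 5 / 6.
Proof. pose proof (ln_1p_le_cubic 1 ltac:(lra)). replace (1 + 1) with 2 in * by ring. lra. Qed.

Lemma sq_two_add_half_ln_le N : 468 <= N -> (2 + ln N / 2) ^ 2 <= N / 10.
Proof.
  intros HN. set (y := sqrt N).
  assert (Hyy : y * y = N) by (apply sqrt_sqrt; lra).
  assert (Hy0 : 0 <= y) by apply sqrt_pos.
  assert (Hy : 21 <= y) by nra.
  assert (HlnN : ln N = 2 * ln y) by (rewrite <- Hyy, ln_mult; lra).
  assert (Hln8 : ln 8 = 3 * ln 2).
  { replace 8 with (2 * (2 * 2)) by ring. rewrite !ln_mult; lra. }
  assert (Hly : ln y <= ln 8 + y / 8 - 1).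
  { replace (ln y) with (ln 8 + ln (y / 8)) by (rewrite <- ln_mult by lra; f_equal; field).
    pose proof (ln_le_sub_1 (y / 8) ltac:(lra)). lra. }
  assert (Hly0 : 0 <= ln y) by (rewrite <- ln_1; left; apply ln_increasing; lra).
  pose proof ln_2_le.
  rewrite HlnN, <- Hyy.
  replace (2 + 2 * ln y / 2) with (2 + ln y) by field.
  apply Rle_trans with ((7 / 2 + y / 8) ^ 2); [apply pow_incr | nra]; lra.
Qed.

Definition log_ell (k : nat) : R := / INR k * ln (INR (fact k)).

Lemma ell_exp k : ell k = exp (log_ell k).
Proof. reflexivity. Qed.

Lemma xseq_log_ell k : xseq k = log_ell (S k) - log_ell k.
Proof.
  unfold xseq. rewrite !ell_exp. unfold Rdiv.
  rewrite <- exp_Ropp, <- exp_plus, ln_exp. ring.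
Qed.

Lemma ln_fact_log_ell k : ln (INR (fact k)) = INR k * log_ell k.
Proof.
  unfold log_ell. destruct k as [| k]; [simpl; rewrite ln_1; ring |].
  field. apply not_0_INR. lia.
Qed.

Lemma log_ell_succ_sub k :
  log_ell (S k) - log_ell k = (ln (INR k + 1) - log_ell k) / (INR k + 1).
Proof.
  pose proof (pos_INR k).
  unfold log_ell at 1. rewrite ln_fact_succ, ln_fact_log_ell, S_INR. field. lra.
Qed.

Lemma log_ell_stirling k : (1 <= k)%nat ->
  log_ell k = ln (INR k) - 1 + stirling_defect k / INR k.
Proof.
  intros Hk. assert (1 <= INR k) by (apply (le_INR 1); lia).
  unfold log_ell, stirling_defect. field. lra.
Qed.

(* With [P = ln (n + 1) - log_ell n] and [l = ln ((n + 2) / (n + 1))], [v] and [u] are the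
   increments [log_ell (n + 1) - log_ell n] and [log_ell (n + 2) - log_ell (n + 1)]. *)
Lemma half_diff_add_sq_half_sum N P l u v : 0 <= N ->
  v = P / (N + 1) -> u = (l + P - v) / (N + 2) ->
  (u - v) / 2 + ((u + v) / 2) ^ 2 / 2
  = (P + l / 2 - (N + 2) / (N + 1)) ^ 2 / (2 * (N + 2) ^ 2)
    + (l - / (N + 1)) / (2 * (N + 1)).
Proof. intros HN -> ->. field. lra. Qed.

Lemma completed_square_le N q lam l : 468 <= N ->
  1 <= q <= 1 + ln N / 2 -> 0 <= lam <= / N -> 0 <= l <= / (N + 1) ->
  (lam + 1 - q / N + l / 2 - (N + 2) / (N + 1)) ^ 2 <= / (10 * N).
Proof.
  intros HN Hq Hlam Hl.
  assert (HNN1 : / (N + 1) <= / N) by (apply Rinv_le_contravar; lra).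
  replace (lam + 1 - q / N + l / 2 - (N + 2) / (N + 1))
    with (lam + l / 2 - / (N + 1) - q * / N) by (field; lra).
  assert (Hq_over_N : / N <= q * / N) by nra.
  apply Rle_trans with (((1 + q) * / N) ^ 2).
  { assert (0 <= (1 + q) * / N) by (apply Rmult_le_pos; lra). nra. }
  apply Rle_trans with ((2 + ln N / 2) ^ 2 * / N ^ 2).
  { rewrite Rpow_mult_distr, pow_inv.
    apply Rmult_le_compat_r; [left; apply Rinv_0_lt_compat, pow_lt; lra |].
    apply pow_incr. lra. }
  apply Rle_trans with (N / 10 * / N ^ 2).
  { apply Rmult_le_compat_r; [left; apply Rinv_0_lt_compat, pow_lt; lra |].
    now apply sq_two_add_half_ln_le. }
  right. field. lra.
Qed.

Lemma exponent_poly_le N : 468 <= N ->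
  / (10 * N) / (2 * (N + 2) ^ 2)
  + (- (/ (N + 1)) ^ 2 / 2 + (/ (N + 1)) ^ 3 / 3) / (2 * (N + 1))
  <= - (19 / (100 * N ^ 3)).
Proof.
  intros HN.
  assert (Hsq : / (10 * N) / (2 * (N + 2) ^ 2) <= 5 / (100 * N ^ 3)).
  { replace (/ (10 * N) / (2 * (N + 2) ^ 2)) with (/ (20 * N * (N + 2) ^ 2)) by (field; lra).
    replace (5 / (100 * N ^ 3)) with (/ (20 * N ^ 3)) by (field; lra).
    apply Rinv_le_contravar; [apply Rmult_lt_0_compat; [lra | apply pow_lt; lra] | nra]. }
  assert (Hcub : (- (/ (N + 1)) ^ 2 / 2 + (/ (N + 1)) ^ 3 / 3) / (2 * (N + 1))
                 <= - (24 / (100 * N ^ 3))).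
  { set (M := N + 1).
    assert (HM : 469 <= M) by (unfold M; lra).
    replace N with (M - 1) by (unfold M; ring).
    assert (HM4 : 0 < M ^ 4) by (apply pow_lt; lra).
    assert (HM3 : 0 < (M - 1) ^ 3) by (apply pow_lt; lra).
    apply Rmult_le_reg_r with (300 * M ^ 4 * (M - 1) ^ 3); [nra |].
    replace ((- (/ M) ^ 2 / 2 + (/ M) ^ 3 / 3) / (2 * M) * (300 * M ^ 4 * (M - 1) ^ 3))
      with (25 * (2 - 3 * M) * (M - 1) ^ 3) by (field; lra).
    replace (- (24 / (100 * (M - 1) ^ 3)) * (300 * M ^ 4 * (M - 1) ^ 3))
      with (- 72 * M ^ 4) by (field; lra).
    nra. }
  lra.
Qed.

Lemma log_ell_exponent_le n u v : (468 <= n)%nat ->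
  u = log_ell (S (S n)) - log_ell (S n) -> v = log_ell (S n) - log_ell n ->
  (u - v) / 2 + ((u + v) / 2) ^ 2 / 2 <= - (19 / (100 * INR n ^ 3)).
Proof.
  intros Hn Hu Hv.
  set (N := INR n).
  assert (HN : 468 <= N) by (apply (le_INR 468) in Hn; rewrite INR_IZR_INZ in Hn; exact Hn).
  set (q := stirling_defect n). set (lam := ln (1 + / N)). set (l := ln (1 + / (N + 1))).
  set (P := lam + 1 - q / N).
  assert (HP : ln (N + 1) - log_ell n = P).
  { unfold P, lam, q. rewrite log_ell_stirling, ln_succ by (lia || lra). fold N. field. lra. }
  assert (Hv' : v = P / (N + 1)) by (rewrite Hv, log_ell_succ_sub; fold N; rewrite HP; reflexivity).
  assert (Hu' : u = (l + P - v) / (N + 2)).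
  { rewrite Hu, log_ell_succ_sub, S_INR, Hv; fold N. rewrite ln_succ, <- HP by lra. fold l.
    replace (N + 1 + 1) with (N + 2) by ring. f_equal. ring. }
  rewrite (half_diff_add_sq_half_sum N P l u v) by lra.
  pose proof (ln_1p_inv_bounds N ltac:(lra)) as Hlam.
  pose proof (ln_1p_inv_bounds (N + 1) ltac:(lra)) as Hl.
  pose proof (ln_1p_le_cubic (/ (N + 1)) ltac:(lra)) as Hl3.
  pose proof (completed_square_le N q lam l HN (stirling_defect_bounds n ltac:(lia)) Hlam Hl) as Hsq.
  fold P in Hsq.
  eapply Rle_trans; [| exact (exponent_poly_le N HN)].
  apply Rplus_le_compat; apply Rmult_le_compat_r.
  - left. apply Rinv_0_lt_compat. nra.
  - exact Hsq.
  - left. apply Rinv_0_lt_compat. lra.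
  - fold l in Hl3. lra.
Qed.

Lemma exp_neg_cubic_le N : 468 <= N ->
  exp (- (19 / (100 * N ^ 3))) <= 1 - 25 / (144 * N ^ 3) - 1 / (4 * N ^ 4).
Proof.
  intros HN. set (h := / N).
  assert (Hh : 0 < h <= / 468) by (split; [apply Rinv_0_lt_compat | apply Rinv_le_contravar]; lra).
  replace (19 / (100 * N ^ 3)) with (19 / 100 * h ^ 3) by (unfold h; field; lra).
  replace (1 - 25 / (144 * N ^ 3) - 1 / (4 * N ^ 4)) with (1 - 25 / 144 * h ^ 3 - / 4 * h ^ 4)
    by (unfold h; field; lra).
  set (z := 19 / 100 * h ^ 3).
  assert (Hh3 : 0 < h ^ 3 <= / 1000) by (split; [apply pow_lt | simpl]; nra).
  assert (Hz : 1 <= (1 - 25 / 144 * h ^ 3 - / 4 * h ^ 4) * (1 + z)).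
  { unfold z. replace (h ^ 4) with (h * h ^ 3) by ring. nra. }
  assert (Hz0 : 0 < z) by (unfold z; lra).
  rewrite exp_Ropp.
  pose proof (exp_ineq1_le z).
  apply Rle_trans with (/ (1 + z)); [apply Rinv_le_contravar; lra |].
  apply (Rmult_le_reg_r (1 + z)); [lra |].
  rewrite Rinv_l by lra. lra.
Qed.

Lemma exp_add_exp_opp u v :
  exp u + exp (- v) = 2 * exp ((u - v) / 2) * cosh ((u + v) / 2).
Proof.
  unfold cosh.
  replace u with ((u - v) / 2 + (u + v) / 2) at 1 by field.
  replace (- v) with ((u - v) / 2 + - ((u + v) / 2)) by field.
  rewrite !exp_plus. field.
Qed.

Lemma exp_le_exp_neg_cubic n u v : (468 <= n)%nat ->
  u = log_ell (S (S n)) - log_ell (S n) -> v = log_ell (S n) - log_ell n ->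
  exp ((u - v) / 2) * cosh ((u + v) / 2) <= exp (- (19 / (100 * INR n ^ 3))).
Proof.
  intros Hn Hu Hv.
  apply Rle_trans with (exp ((u - v) / 2 + ((u + v) / 2) ^ 2 / 2)).
  { rewrite exp_plus. apply Rmult_le_compat_l; [left; apply exp_pos | apply cosh_le_exp_sq]. }
  destruct (Rle_lt_or_eq_dec _ _ (log_ell_exponent_le n u v Hn Hu Hv)) as [Hlt | ->];
    [left; now apply exp_increasing | right; reflexivity].
Qed.

Lemma fifth_order_term_bounds N : 468 <= N ->
  0 <= (/ 2 * ln N + 101 / 288 + / 2 * ln (2 * PI)) / N ^ 5
    < 25 / (144 * N ^ 3) + 1 / (4 * N ^ 4).
Proof.
  intros HN. pose proof PI2_1. pose proof PI_4.
  assert (HlnN : 0 <= ln N <= N).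
  { split; [rewrite <- ln_1; left; apply ln_increasing; lra | pose proof (ln_le_sub_1 N ltac:(lra)); lra]. }
  assert (Hln2pi : 0 <= ln (2 * PI) <= 7).
  { split; [rewrite <- ln_1; left; apply ln_increasing; lra | pose proof (ln_le_sub_1 (2 * PI) ltac:(lra)); lra]. }
  assert (HN5 : 0 < N ^ 5) by (apply pow_lt; lra).
  split; [apply Rdiv_le_0_compat; lra |].
  apply Rle_lt_trans with ((N / 2 + 4) / N ^ 5).
  { apply Rmult_le_compat_r; [left; apply Rinv_0_lt_compat |]; lra. }
  replace (25 / (144 * N ^ 3) + 1 / (4 * N ^ 4)) with ((25 / 144 * N ^ 2 + N / 4) / N ^ 5)
    by (field; lra).
  apply Rmult_lt_compat_r; [apply Rinv_0_lt_compat |]; nra.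
Qed.

Theorem mainTheorem10 : forall n : nat, (468 <= n)%nat ->
  let N := INR n in
  ell (n + 2) / ell (n + 1) + ell n / ell (n + 1)
    = 2 * exp ((xseq (n + 1) - xseq n) / 2) * cosh ((xseq (n + 1) + xseq n) / 2)
  /\
  2 * exp ((xseq (n + 1) - xseq n) / 2) * cosh ((xseq (n + 1) + xseq n) / 2)
    <= 2 * (1 - 25 / (144 * N ^ 3) - 1 / (4 * N ^ 4)
             + (/ 2 * ln N + 101 / 288 + / 2 * ln (2 * PI)) / N ^ 5)
  /\
  2 * (1 - 25 / (144 * N ^ 3) - 1 / (4 * N ^ 4)
             + (/ 2 * ln N + 101 / 288 + / 2 * ln (2 * PI)) / N ^ 5) < 2.
Proof.
  intros n Hn N.
  assert (HN : 468 <= N) by (apply (le_INR 468) in Hn; rewrite INR_IZR_INZ in Hn; exact Hn).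
  replace (n + 2)%nat with (S (S n)) by lia. replace (n + 1)%nat with (S n) by lia.
  rewrite !xseq_log_ell.
  set (u := log_ell (S (S n)) - log_ell (S n)). set (v := log_ell (S n) - log_ell n).
  assert (Hsum : ell (S (S n)) / ell (S n) + ell n / ell (S n) = exp u + exp (- v)).
  { rewrite !ell_exp. unfold u, v, Rdiv. rewrite <- !exp_Ropp, <- !exp_plus.
    f_equal; f_equal; ring. }
  rewrite Hsum, exp_add_exp_opp.
  pose proof (exp_le_exp_neg_cubic n u v Hn eq_refl eq_refl) as Hexp.
  fold N in Hexp.
  pose proof (exp_neg_cubic_le N HN).
  pose proof (fifth_order_term_bounds N HN).
  split; [reflexivity | split; lra].
Qed.
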